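(* Let $\mathscr{H}$ be a complex Hilbert space, $N(\cdot)$ a norm on $\mathbb{B}(\mathscr{H})$, and $T\in\mathbb{B}(\mathscr{H})$. Then $$\frac12\max\{w_N(T+T^* ),w_N(T-T^* )\}\leq w_N(T)\leq\frac12\sqrt{w_N^2(T+T^* )+w_N^2(T-T^* )}.$$
   Context: For $T\in\mathbb{B}(\mathscr{H})$: $\Re(T)=\frac12(T+T^* )$ and $w_N(T)=\sup_{\theta\in\mathbb{R}}N(\Re(e^{i\theta}T))$. *)

From HB Require Import structures.
From mathcomp Require Import all_boot all_order all_algebra.
From mathcomp Require Import all_classical all_reals all_analysis.
From mathcomp Require Import complex.
Set Implicit Arguments. Unset Strict Implicit. Unset Printing Implicit Defensive.
Import Order.TTheory GRing.Theory Num.Theory.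
Local Open Scope ring_scope.
Local Open Scope classical_set_scope.

Definition inner_product (R : realType) (V : lmodType R[i]) (ip : V -> V -> R[i]) : Prop :=
  [/\ forall (a : R[i]) (x y z : V), ip (a *: x + y) z = a * ip x z + ip y z,
      forall x y : V, ip y x = conjc (ip x y),
      forall x : V, 0 <= complex.Re (ip x x) /\ complex.Im (ip x x) = 0
    & forall x : V, ip x x = 0 -> x = 0].

Definition ipnorm (R : realType) (V : lmodType R[i]) (ip : V -> V -> R[i]) (x : V) : R :=
  Num.sqrt (complex.Re (ip x x)).

Definition ip_complete (R : realType) (V : lmodType R[i]) (ip : V -> V -> R[i]) : Prop :=
  forall u : nat -> V,
    (forall e : R, 0 < e -> exists M : nat, forall m n : nat, (M <= m)%N -> (M <= n)%N ->
        ipnorm ip (u m - u n) < e) ->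
    exists l : V, forall e : R, 0 < e -> exists M : nat, forall n : nat, (M <= n)%N ->
        ipnorm ip (u n - l) < e.

Definition hilbert_space (R : realType) (V : lmodType R[i]) (ip : V -> V -> R[i]) : Prop :=
  inner_product ip /\ ip_complete ip.

Definition bounded_op (R : realType) (V : lmodType R[i]) (ip : V -> V -> R[i])
  (T : V -> V) : Prop :=
  (forall (a : R[i]) (x y : V), T (a *: x + y) = a *: T x + T y) /\
  exists M : R, forall x : V, ipnorm ip (T x) <= M * ipnorm ip x.

Definition op_add (R : realType) (V : lmodType R[i]) (S T : V -> V) : V -> V :=
  fun x => S x + T x.
Definition op_opp (R : realType) (V : lmodType R[i]) (S : V -> V) : V -> V :=
  fun x => - S x.
Definition op_scale (R : realType) (V : lmodType R[i]) (a : R[i]) (S : V -> V) : V -> V :=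
  fun x => a *: S x.

Definition is_adjoint (R : realType) (V : lmodType R[i]) (ip : V -> V -> R[i])
  (T S : V -> V) : Prop := forall x y : V, ip (T x) y = ip x (S y).

(* the adjoint T^* (chosen; unique when it exists, and it always exists for
   bounded T in a Hilbert space) *)
Definition adjoint (R : realType) (V : lmodType R[i]) (ip : V -> V -> R[i])
  (T : V -> V) : V -> V :=
  match pselect (exists S, is_adjoint ip T S) with
  | left h => projT1 (cid h)
  | right _ => fun _ => 0
  end.

Definition op_Re (R : realType) (V : lmodType R[i]) (ip : V -> V -> R[i])
  (T : V -> V) : V -> V :=
  op_scale (2^-1) (op_add T (adjoint ip T)).

Definition op_norm_on (R : realType) (V : lmodType R[i]) (ip : V -> V -> R[i])
  (N : (V -> V) -> R) : Prop :=
  [/\ forall S, bounded_op ip S -> 0 <= N S,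
      forall S, bounded_op ip S -> N S = 0 -> S = (fun _ => 0),
      forall (a : R[i]) S, bounded_op ip S -> (N (op_scale a S))%:C%C = `|a| * (N S)%:C%C
    & forall S U, bounded_op ip S -> bounded_op ip U -> N (op_add S U) <= N S + N U].

Definition expi (R : realType) (t : R) : R[i] := Complex (cos t) (sin t).

Definition wN (R : realType) (V : lmodType R[i]) (ip : V -> V -> R[i])
  (N : (V -> V) -> R) (T : V -> V) : R :=
  sup [set N (op_Re ip (op_scale (expi t) T)) | t in [set: R]].

From HB Require Import structures.
From mathcomp Require Import all_boot all_order all_algebra.
From mathcomp Require Import all_classical all_reals all_analysis.
From mathcomp Require Import complex.
From mathcomp Require Import ring lra.
Import Order.TTheory GRing.Theory Num.Theory.
Local Open Scope ring_scope.
Local Open Scope classical_set_scope.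

(* With A = T + T^* and B = T - T^*, we have 2 Re(e^{it} T) = cos t A + i sin t B.
   Since A is self-adjoint and B skew-adjoint, Re(e^{it} A) = cos t A and
   Re(e^{it} B) = i sin t B, so w_N(A) = N(A) and w_N(B) = N(B).  Taking t = 0 and
   t = pi/2 gives the lower bound; the triangle inequality and Cauchy-Schwarz,
   |cos t| a + |sin t| b <= sqrt(a^2 + b^2), give the upper bound. *)

Lemma cauchy_schwarz2_unit (F : rcfType) (c s a b : F) :
  c ^+ 2 + s ^+ 2 = 1 -> c * a + s * b <= Num.sqrt (a ^+ 2 + b ^+ 2).
Proof.
move=> cs1; have [neg|nneg] := ltP (c * a + s * b) 0.
  exact: le_trans (ltW neg) (sqrtr_ge0 _).
rewrite -(ger0_norm nneg) -sqrtr_sqr ler_wsqrtr // -[leRHS]mul1r -cs1 -subr_ge0.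
have -> : (c ^+ 2 + s ^+ 2) * (a ^+ 2 + b ^+ 2) - (c * a + s * b) ^+ 2 = (s * a - c * b) ^+ 2.
  by ring.
exact: sqr_ge0.
Qed.

Section SupImage.
Context {R : realType} (f : R -> R).

Local Notation image_f := [set f t | t in [set: R]].

Lemma sup_image_le b : (forall t, f t <= b) -> sup image_f <= b.
Proof. by move=> le_fb; apply: ge_sup => [|_ [t _ <-]]; [exists (f 0), 0 |]. Qed.

Lemma le_sup_image b t0 : (forall t, f t <= b) -> f t0 <= sup image_f.
Proof. by move=> le_fb; apply: ub_le_sup; [exists b => _ [t _ <-] | exists t0]. Qed.

Lemma sup_image_attained t0 : (forall t, f t <= f t0) -> sup image_f = f t0.
Proof.
by move=> le_ft0; apply/le_anti; rewrite sup_image_le //= (le_sup_image _ _ le_ft0).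
Qed.

End SupImage.

Section Expi.
Context {R : realType}.

Lemma halfC : 2^-1 = (2^-1 : R)%:C%C.
Proof. by rewrite fmorphV rmorph_nat. Qed.

Lemma expiE (t : R) : expi t = (cos t)%:C%C + Complex 0 (sin t).
Proof. by rewrite /expi; simpc. Qed.

Lemma conj_expiE (t : R) : (expi t)^*%C = (cos t)%:C%C - Complex 0 (sin t).
Proof. by rewrite /expi; simpc. Qed.

Lemma half_expiDconj (t : R) : 2^-1 * (expi t + (expi t)^*%C) = (cos t)%:C%C.
Proof. by rewrite halfC /expi; simpc; congr Complex; lra. Qed.

Lemma half_expiBconj (t : R) : 2^-1 * (expi t - (expi t)^*%C) = Complex 0 (sin t).
Proof. by rewrite halfC /expi; simpc; congr Complex; lra. Qed.

End Expi.

Section HilbertOperators.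
Context {R : realType} {V : lmodType R[i]} {ip : V -> V -> R[i]}.
Hypothesis ipP : inner_product ip.

Local Notation sqnorm x := (complex.Re (ip x x)).

Lemma ipDl x y z : ip (x + y) z = ip x z + ip y z.
Proof. by case: ipP => lin _ _ _; have := lin 1 x y z; rewrite scale1r mul1r. Qed.

Lemma ip0l z : ip 0 z = 0.
Proof. by apply: (addrI (ip 0 z)); rewrite -ipDl !addr0. Qed.

Lemma ipZl a x z : ip (a *: x) z = a * ip x z.
Proof. by case: ipP => lin _ _ _; have := lin a x 0 z; rewrite addr0 ip0l addr0. Qed.

Lemma ipNl x z : ip (- x) z = - ip x z.
Proof. by rewrite -scaleN1r ipZl mulN1r. Qed.

Lemma ip_conj x y : ip y x = (ip x y)^*%C.
Proof. by case: ipP. Qed.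

Lemma ipDr x y z : ip x (y + z) = ip x y + ip x z.
Proof. by rewrite [LHS]ip_conj ipDl rmorphD [ip x y]ip_conj [ip x z]ip_conj. Qed.

Lemma ipZr a x y : ip x (a *: y) = a^*%C * ip x y.
Proof. by rewrite [LHS]ip_conj ipZl rmorphM [ip x y]ip_conj. Qed.

Lemma ipNr x z : ip x (- z) = - ip x z.
Proof. by rewrite -scaleN1r ipZr rmorphN1 mulN1r. Qed.

Lemma ip_inj_r u v : (forall x, ip x u = ip x v) -> u = v.
Proof.
case: ipP => _ _ _ definite eq_uv; apply/eqP; rewrite -subr_eq0; apply/eqP.
by apply: definite; rewrite ipDr ipNr eq_uv subrr.
Qed.

Lemma Re_ip_sym x y : complex.Re (ip y x) = complex.Re (ip x y).
Proof. by rewrite ip_conj; case: (ip x y). Qed.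

Lemma ip_self_real x : ip x x = (sqnorm x)%:C%C.
Proof. by case: ipP => _ _ + _ => /(_ x) []; case: (ip x x) => a b /= _ ->. Qed.

Lemma sqnorm_ge0 x : 0 <= sqnorm x.
Proof. by case: ipP => _ _ + _ => /(_ x) []. Qed.

Lemma sqnormD x y : sqnorm (x + y) = sqnorm x + sqnorm y + 2 * complex.Re (ip x y).
Proof. by rewrite ipDl !ipDr !raddfD /= (Re_ip_sym x y); lra. Qed.

Lemma sqnormB x y : sqnorm (x - y) = sqnorm x + sqnorm y - 2 * complex.Re (ip x y).
Proof. by rewrite sqnormD ipNl !ipNr opprK raddfN /=; lra. Qed.

Lemma sqnormZ a x :
  sqnorm (a *: x) = (complex.Re a ^+ 2 + complex.Im a ^+ 2) * sqnorm x.
Proof. by rewrite ipZl ipZr ip_self_real; case: a => r s /=; ring. Qed.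

Lemma sqnormD_le x y : sqnorm (x + y) <= 2 * sqnorm x + 2 * sqnorm y.
Proof. by have := sqnorm_ge0 (x - y); rewrite sqnormB sqnormD; lra. Qed.

Definition op_linear (T : V -> V) := forall a x y, T (a *: x + y) = a *: T x + T y.

Lemma bounded_opP T : bounded_op ip T <->
  op_linear T /\ exists2 K, 0 <= K & forall x, sqnorm (T x) <= K * sqnorm x.
Proof.
split=> [[linT [M leM]] | [linT [K K_ge0 leK]]]; split=> //.
- exists (M ^+ 2) => [|x]; first exact: sqr_ge0.
  rewrite -(sqr_sqrtr (sqnorm_ge0 (T x))) -(sqr_sqrtr (sqnorm_ge0 x)) -exprMn.
  rewrite ler_pXn2r ?nnegrE ?sqrtr_ge0 //; first exact: leM.
  exact: le_trans (sqrtr_ge0 _) (leM x).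
- by exists (Num.sqrt K) => x; rewrite /ipnorm -sqrtrM // ler_wsqrtr.
Qed.

Lemma bounded_op_add {X Y : V -> V} :
  bounded_op ip X -> bounded_op ip Y -> bounded_op ip (op_add X Y).
Proof.
move=> /bounded_opP[linX [KX KX_ge0 leX]] /bounded_opP[linY [KY KY_ge0 leY]].
apply/bounded_opP; split=> [a x y|].
  by rewrite /op_add linX linY scalerDr addrACA.
exists (2 * KX + 2 * KY) => [|x]; first lra.
rewrite /op_add; apply: (le_trans (sqnormD_le _ _)).
by have := leX x; have := leY x; have := sqnorm_ge0 x; nra.
Qed.

Lemma bounded_op_scale (a : R[i]) {X : V -> V} :
  bounded_op ip X -> bounded_op ip (op_scale a X).
Proof.
move=> /bounded_opP[linX [K K_ge0 leK]].
have a2_ge0 : 0 <= complex.Re a ^+ 2 + complex.Im a ^+ 2 by rewrite addr_ge0 ?sqr_ge0.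
apply/bounded_opP; split=> [b x y|].
  by rewrite /op_scale linX scalerDr !scalerA mulrC.
exists ((complex.Re a ^+ 2 + complex.Im a ^+ 2) * K) => [|x]; first exact: mulr_ge0.
by rewrite /op_scale sqnormZ -mulrA ler_wpM2l.
Qed.

Lemma op_oppE (X : V -> V) : op_opp X = op_scale (-1) X.
Proof. by apply: funext => x; rewrite /op_opp /op_scale scaleN1r. Qed.

Lemma bounded_op_opp {X : V -> V} : bounded_op ip X -> bounded_op ip (op_opp X).
Proof. by rewrite op_oppE; apply: bounded_op_scale. Qed.

Lemma bounded_op_adjoint {T S : V -> V} :
  bounded_op ip T -> is_adjoint ip T S -> bounded_op ip S.
Proof.
move=> /bounded_opP[linT [K K_ge0 leK]] TS.
apply/bounded_opP; split=> [a x y|].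
  by apply: ip_inj_r => z; rewrite -TS ipDr ipZr ipDr ipZr -!TS.
exists ((K + 1) ^+ 2) => [|y]; first exact: sqr_ge0.
have sqnS : sqnorm (S y) = complex.Re (ip (T (S y)) y) by rewrite TS.
(* Expand 0 <= |T (S y) - (K + 1) y|^2 using <T (S y), y> = |S y|^2. *)
have := sqnorm_ge0 (T (S y) - (K + 1)%:C%C *: y).
rewrite sqnormB sqnormZ ipZr conjc_real /= expr0n addr0 -/(sqnorm y).
have -> : complex.Re ((K + 1)%:C%C * ip (T (S y)) y) = (K + 1) * sqnorm (S y).
  by rewrite sqnS; case: (ip _ _) => ? ? /=; ring.
by have := leK (S y); have := sqnorm_ge0 (S y); have := sqnorm_ge0 y; nra.
Qed.

Lemma adjointE {T S : V -> V} : is_adjoint ip T S -> adjoint ip T = S.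
Proof.
rewrite /adjoint => TS; case: pselect => [hS | []]; last by exists S.
case: (cid hS) => S' TS' /=; apply: funext => y; apply: ip_inj_r => x.
by rewrite -TS' -TS.
Qed.

Lemma is_adjoint_sym {T S : V -> V} : is_adjoint ip T S -> is_adjoint ip S T.
Proof. by move=> TS x y; rewrite ip_conj -TS -ip_conj. Qed.

Lemma is_adjoint_scale (c : R[i]) {T S : V -> V} :
  is_adjoint ip T S -> is_adjoint ip (op_scale c T) (op_scale c^*%C S).
Proof. by move=> TS x y; rewrite /op_scale ipZl ipZr conjcK TS. Qed.

Lemma is_adjoint_add_adjoint {T S : V -> V} :
  is_adjoint ip T S -> is_adjoint ip (op_add T S) (op_add T S).
Proof.
by move=> TS x y; rewrite /op_add ipDl ipDr TS (is_adjoint_sym TS) addrC.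
Qed.

Lemma is_adjoint_sub_adjoint {T S : V -> V} :
  is_adjoint ip T S -> is_adjoint ip (op_add T (op_opp S)) (op_opp (op_add T (op_opp S))).
Proof.
move=> TS x y; rewrite /op_add /op_opp ipDl ipNl ipNr ipDr ipNr TS (is_adjoint_sym TS).
by rewrite opprD opprK addrC.
Qed.

Lemma op_ReE (c : R[i]) {T S : V -> V} : is_adjoint ip T S ->
  op_Re ip (op_scale c T) = op_scale 2^-1 (op_add (op_scale c T) (op_scale c^*%C S)).
Proof. by move=> TS; rewrite /op_Re (adjointE (is_adjoint_scale c TS)). Qed.

Lemma op_Re_expi_selfadjoint t {X : V -> V} :
  is_adjoint ip X X -> op_Re ip (op_scale (expi t) X) = op_scale (cos t)%:C%C X.
Proof.
move=> XX; rewrite (op_ReE _ XX); apply: funext => x.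
by rewrite /op_scale /op_add -scalerDl scalerA half_expiDconj.
Qed.

Lemma op_Re_expi_skewadjoint t {X : V -> V} : is_adjoint ip X (op_opp X) ->
  op_Re ip (op_scale (expi t) X) = op_scale (Complex 0 (sin t)) X.
Proof.
move=> XX; rewrite (op_ReE _ XX); apply: funext => x.
by rewrite /op_scale /op_add /op_opp scalerN -scalerBl scalerA half_expiBconj.
Qed.

Lemma op_Re_expi t {T S : V -> V} : is_adjoint ip T S ->
  op_Re ip (op_scale (expi t) T) = op_scale 2^-1
    (op_add (op_scale (cos t)%:C%C (op_add T S))
            (op_scale (Complex 0 (sin t)) (op_add T (op_opp S)))).
Proof.
move=> TS; rewrite (op_ReE _ TS); apply: funext => x.
rewrite /op_scale /op_add /op_opp conj_expiE expiE scalerDl scalerBl.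
by rewrite !scalerDr !scalerN addrACA.
Qed.

Context {N : (V -> V) -> R}.
Hypothesis NP : op_norm_on ip N.

Lemma op_norm_scale a {X : V -> V} : bounded_op ip X ->
  N (op_scale a X) = Num.sqrt (complex.Re a ^+ 2 + complex.Im a ^+ 2) * N X.
Proof.
case: NP => _ _ NZ _ bX; have := NZ a X bX; rewrite normc_def.
by case: a => r s /= [-> _]; rewrite mulr0 subr0.
Qed.

Lemma op_norm_scaleR (r : R) {X : V -> V} : bounded_op ip X ->
  N (op_scale r%:C%C X) = `|r| * N X.
Proof. by move=> bX; rewrite op_norm_scale //= expr0n addr0 sqrtr_sqr. Qed.

Lemma op_norm_scaleI (r : R) {X : V -> V} : bounded_op ip X ->
  N (op_scale (Complex 0 r) X) = `|r| * N X.
Proof. by move=> bX; rewrite op_norm_scale //= expr0n add0r sqrtr_sqr. Qed.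

Lemma wN_selfadjoint {X : V -> V} :
  bounded_op ip X -> is_adjoint ip X X -> wN ip N X = N X.
Proof.
move=> bX XX; have NX_ge0 : 0 <= N X by case: NP => + _ _ _; apply.
rewrite /wN (sup_image_attained _ 0) => [|t].
  by rewrite op_Re_expi_selfadjoint // op_norm_scaleR // cos0 normr1 mul1r.
rewrite !op_Re_expi_selfadjoint // !op_norm_scaleR // cos0 normr1 mul1r.
exact: ler_piMl (cos_max t).
Qed.

Lemma wN_skewadjoint {X : V -> V} :
  bounded_op ip X -> is_adjoint ip X (op_opp X) -> wN ip N X = N X.
Proof.
move=> bX XX; have NX_ge0 : 0 <= N X by case: NP => + _ _ _; apply.
rewrite /wN (sup_image_attained _ (pi / 2)) => [|t].
  by rewrite op_Re_expi_skewadjoint // op_norm_scaleI // sin_pihalf normr1 mul1r.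
rewrite !op_Re_expi_skewadjoint // !op_norm_scaleI // sin_pihalf normr1 mul1r.
exact: ler_piMl (sin_max t).
Qed.

Section Decomposition.
Context {T S : V -> V}.
Hypotheses (bT : bounded_op ip T) (TS : is_adjoint ip T S).

Let bS : bounded_op ip S := bounded_op_adjoint bT TS.
Let bA : bounded_op ip (op_add T S) := bounded_op_add bT bS.
Let bB : bounded_op ip (op_add T (op_opp S)) := bounded_op_add bT (bounded_op_opp bS).

Lemma op_norm_Re_expi t : N (op_Re ip (op_scale (expi t) T)) =
  2^-1 * N (op_add (op_scale (cos t)%:C%C (op_add T S))
                   (op_scale (Complex 0 (sin t)) (op_add T (op_opp S)))).
Proof.
rewrite (op_Re_expi _ TS) halfC op_norm_scaleR ?ger0_norm //.
exact: bounded_op_add (bounded_op_scale _ bA) (bounded_op_scale _ bB).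
Qed.

Lemma op_norm_Re_expi_le t : N (op_Re ip (op_scale (expi t) T)) <=
  2^-1 * Num.sqrt (N (op_add T S) ^+ 2 + N (op_add T (op_opp S)) ^+ 2).
Proof.
case: NP => _ _ _ NtriangleD.
rewrite op_norm_Re_expi ler_wpM2l //.
apply: le_trans (NtriangleD _ _ (bounded_op_scale _ bA) (bounded_op_scale _ bB)) _.
rewrite op_norm_scaleR // op_norm_scaleI // cauchy_schwarz2_unit //.
by rewrite !real_normK ?num_real // cos2Dsin2.
Qed.

Lemma le_wN t : N (op_Re ip (op_scale (expi t) T)) <= wN ip N T.
Proof. exact: le_sup_image op_norm_Re_expi_le. Qed.

Lemma op_norm_Re_expi0 : N (op_Re ip (op_scale (expi 0) T)) = 2^-1 * N (op_add T S).
Proof.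
rewrite op_norm_Re_expi cos0 sin0; congr (_ * N _); apply: funext => x.
by rewrite /op_add /op_scale scale1r scale0r addr0.
Qed.

Lemma op_norm_Re_expi_pihalf :
  N (op_Re ip (op_scale (expi (pi / 2)) T)) = 2^-1 * N (op_add T (op_opp S)).
Proof.
rewrite op_norm_Re_expi cos_pihalf sin_pihalf.
have -> : op_add (op_scale 0%:C%C (op_add T S)) (op_scale (Complex 0 1) (op_add T (op_opp S)))
    = op_scale (Complex 0 1) (op_add T (op_opp S)).
  by apply: funext => x; rewrite /op_add /op_scale scale0r add0r.
by rewrite op_norm_scaleI // normr1 mul1r.
Qed.

End Decomposition.

End HilbertOperators.

Theorem corollary2p9 (R : realType) (V : lmodType R[i]) (ip : V -> V -> R[i])
  (N : (V -> V) -> R) (T : V -> V) :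
  hilbert_space ip ->
  op_norm_on ip N ->
  bounded_op ip T ->
  (exists S, is_adjoint ip T S) ->
  let Ts := adjoint ip T in
  2^-1 * Num.max (wN ip N (op_add T Ts)) (wN ip N (op_add T (op_opp Ts)))
    <= wN ip N T /\
  wN ip N T <= 2^-1 * Num.sqrt (wN ip N (op_add T Ts) ^+ 2
                                + wN ip N (op_add T (op_opp Ts)) ^+ 2).
Proof.
move=> [ipP _] NP bT [S TS] Ts; rewrite /Ts (adjointE ipP TS).
have bS := bounded_op_adjoint ipP bT TS.
rewrite (wN_selfadjoint ipP NP (bounded_op_add ipP bT bS) (is_adjoint_add_adjoint ipP TS)).
rewrite (wN_skewadjoint ipP NP (bounded_op_add ipP bT (bounded_op_opp ipP bS))
                                (is_adjoint_sub_adjoint ipP TS)).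
split; last exact: sup_image_le (op_norm_Re_expi_le ipP NP bT TS).
rewrite maxr_pMr // ge_max -(op_norm_Re_expi0 ipP NP bT TS).
by rewrite -(op_norm_Re_expi_pihalf ipP NP bT TS) !(le_wN ipP NP bT TS).
Qed.
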